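(* Let $n\ge 1$ and $d$ be positive integers, and define $a_1=d$ and $a_k=d\big(1+\sum_{j=1}^{k-1}a_j\big)$ for every integer $k\in\{2,\dots,n\}$. Let $\mathbf{z}=(z_0,z_1,\dots,z_n)\in\mathbb{R}\times[0,d]^n$. Then every integer vector $\mathbf{x}=(x_0,\dots,x_n)\in\mathbb{Z}\times([0,d]\cap\mathbb{Z})^n$ with $\mathbf{x}\le_L\mathbf{z}$ satisfies the linear inequalities $$x_i+\sum_{j=0}^{i-1}a_{i-j}\,(x_j-\lceil z_j\rceil)\le \lfloor z_i\rfloor\qquad\text{for all } i\in\{0,\dots,n\},$$ where for $i=0$ the sum is empty (equal to $0$).
   Context: For $\mathbf{x},\mathbf{y}\in\mathbb{R}^{n+1}$, $\mathbf{x}=(x_0,\dots,x_n)$ is lexicographically lower than $\mathbf{y}=(y_0,\dots,y_n)$, written $\mathbf{x}<_L\mathbf{y}$, if there is $k\in\{0,\dots,n\}$ with $x_k<y_k$ and $x_i=y_i$ for all $i<k$; $\mathbf{x}\le_L\mathbf{y}$ means $\mathbf{x}<_L\mathbf{y}$ or $\mathbf{x}=\mathbf{y}$. *)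

From HB Require Import structures.
From mathcomp Require Import all_boot all_order all_algebra.
From mathcomp Require Export reals.
Set Implicit Arguments. Unset Strict Implicit. Unset Printing Implicit Defensive.
Import Order.TTheory GRing.Theory Num.Theory.
Local Open Scope ring_scope.

Definition lex_lt (R : numDomainType) (n : nat) (x y : 'I_n.+1 -> R) : Prop :=
  exists k : 'I_n.+1, x k < y k /\ forall i : 'I_n.+1, (i < k)%N -> x i = y i.

Definition lex_le (R : numDomainType) (n : nat) (x y : 'I_n.+1 -> R) : Prop :=
  lex_lt x y \/ x = y.

(* Write c_j := x_j - ceil z_j. Every coordinate before the first index k where
   x and z differ is an integer equal to x_j, so c_j = 0 there and the
   inequality for i <= k is just x_i <= floor z_i. For i > k the term at k has
   c_k <= -1 and the later ones have c_j <= d, so the sum is at most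
   -a_{i-k} + d (a_1 + ... + a_{i-k-1}) = -d, which cancels x_i <= d. *)
From HB Require Import structures.
From mathcomp Require Import all_boot all_order all_algebra.
From mathcomp Require Import reals.

Set Implicit Arguments.
Unset Strict Implicit.
Unset Printing Implicit Defensive.
Import Order.TTheory GRing.Theory Num.Theory.
Local Open Scope ring_scope.

Lemma big_ord_ltn_inord (V : nmodType) (n : nat) (i : 'I_n.+1)
    (F : nat -> 'I_n.+1 -> V) :
  \sum_(j < n.+1 | (j < i)%N) F j j = \sum_(0 <= j < i) F j (inord j).
Proof.
rewrite (big_nat_widen _ _ n.+1) ?big_mkord; last exact: ltnW.
by apply: eq_bigr => j _; rewrite inord_val.
Qed.

(* k is the first index where x and y differ, or n.+1 when x = y. *)
Lemma lex_le_prefix (R : numDomainType) (n : nat) (x y : 'I_n.+1 -> R)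
    (i : 'I_n.+1) :
  lex_le x y ->
  exists k : nat, (forall j, (j < k)%N -> x (inord j) = y (inord j)) /\
                  ((k <= i)%N -> x (inord k) < y (inord k)).
Proof.
case=> [[k [lt_xy_k eq_pre]]|<-]; last by exists n.+1; rewrite leqNgt ltn_ord.
exists k; split=> [j lt_jk|_]; last by rewrite inord_val.
by apply: eq_pre; rewrite inordK // (ltn_trans lt_jk).
Qed.

Section CeilDiscrepancy.
Variable R : archiRealDomainType.

Lemma subr_ceil_leN1 (m : int) (r : R) : m%:~R < r -> m - Num.ceil r <= -1.
Proof. by rewrite -ceil_gt_int -lezD1 -lerBrDr addrC lerBlDr. Qed.

Lemma subr_ceil_le (m b : int) (r : R) : m <= b -> 0 <= r -> m - Num.ceil r <= b.
Proof.
move=> le_mb r_ge0; rewrite lerBlDr (le_trans le_mb) // lerDl ceil_ge0.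
exact: lt_le_trans (ltrN10 _) r_ge0.
Qed.

End CeilDiscrepancy.

Section RecursiveWeights.
Variables (d n : nat) (a : nat -> int).
Hypothesis a1 : a 1%N = d%:Z.
Hypothesis a_rec : forall k, (2 <= k <= n)%N ->
  a k = d%:Z * (1 + \sum_(1 <= j < k) a j).

Lemma weight_rec k : (0 < k <= n)%N -> a k = d%:Z * (1 + \sum_(1 <= j < k) a j).
Proof.
case/andP=> k_gt0 le_kn; have [->|k_neq1] := eqVneq k 1%N.
  by rewrite big_geq // addr0 mulr1.
by apply: a_rec; rewrite le_kn andbT ltn_neqAle eq_sym k_neq1.
Qed.

Lemma weight_ge0 k : (0 < k <= n)%N -> 0 <= a k.
Proof.
elim/ltn_ind: k => k IH /andP[k_gt0 le_kn].
rewrite weight_rec ?k_gt0 // mulr_ge0 // addr_ge0 //.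
rewrite big_nat_cond sumr_ge0 // => j /andP[/andP[j_gt0 lt_jk] _].
by rewrite IH // j_gt0 (leq_trans (ltnW lt_jk)).
Qed.

Lemma weighted_sum_le (L : nat) (c : nat -> int) :
  (0 < L <= n)%N -> c 0%N <= -1 -> (forall m, (0 < m < L)%N -> c m <= d%:Z) ->
  \sum_(0 <= m < L) a (L - m)%N * c m <= - d%:Z.
Proof.
move=> /andP[L_gt0 le_Ln] c0 c_le_d.
have head : a L * c 0%N <= - a L.
  by rewrite -mulrN1 ler_wpM2l // weight_ge0 ?L_gt0.
have tail : \sum_(1 <= m < L) a (L - m)%N * c m <= d%:Z * \sum_(1 <= j < L) a j.
  rewrite mulr_sumr big_nat_rev /= add1n.
  apply: ler_sum_nat => m /andP[m_gt0 lt_mL].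
  rewrite subSS subKn ?(ltnW lt_mL) // mulrC ler_wpM2r ?c_le_d //.
    by rewrite weight_ge0 // m_gt0 (leq_trans (ltnW lt_mL)).
  by rewrite subn_gt0 lt_mL -subn_gt0 subnBA ?(ltnW lt_mL) // addnC addnK.
rewrite big_ltn // subn0 (weight_rec (k := L)) ?L_gt0 // in head *.
apply: le_trans (lerD head tail) _.
by rewrite mulrDr mulr1 opprD subrK.
Qed.

Lemma lex_weighted_le_floor (R : archiRealDomainType) (X : nat -> int)
    (Z : nat -> R) (i k : nat) :
  (i <= n)%N ->
  (forall j, (0 < j <= n)%N -> X j <= d%:Z) ->
  (forall j, (0 < j <= n)%N -> 0 <= Z j) ->
  (forall j, (j < k)%N -> (X j)%:~R = Z j) ->
  ((k <= i)%N -> (X k)%:~R < Z k) ->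
  X i + \sum_(0 <= j < i) a (i - j)%N * (X j - Num.ceil (Z j)) <= Num.floor (Z i).
Proof.
move=> le_in X_le_d Z_ge0 eq_pre lt_k.
pose c j := X j - Num.ceil (Z j).
have prefix_sum0 p : (p <= k)%N ->
    \sum_(0 <= j < p) a (i - j)%N * (X j - Num.ceil (Z j)) = 0.
  move=> le_pk; rewrite big_nat_cond big1 // => j /andP[/andP[_ lt_jp] _].
  by rewrite -eq_pre ?intrKceil ?subrr ?mulr0 // (leq_trans lt_jp).
case: (ltngtP k i) => [lt_ki|lt_ik|eq_ki].
- rewrite (big_cat_nat _ (n := k)) ?(ltnW lt_ki) //= prefix_sum0 // add0r.
  rewrite -[k]add0n big_addn.
  have i_gt0 : (0 < i)%N by apply: leq_ltn_trans lt_ki.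
  have sum_le : \sum_(0 <= m < i - k) a (i - (m + k))%N * c (m + k)%N <= - d%:Z.
    rewrite (eq_bigr (fun m => a (i - k - m)%N * c (m + k)%N)) => [|m _].
      apply: weighted_sum_le => [|/=|m /andP[m_gt0 lt_m]].
      + by rewrite subn_gt0 lt_ki (leq_trans (leq_subr _ _)).
      + by apply: subr_ceil_leN1; apply: lt_k; apply: ltnW.
      + apply: subr_ceil_le; [apply: X_le_d|apply: Z_ge0];
          by rewrite addn_gt0 m_gt0 /= (leq_trans _ le_in) // ltnW // addnC -ltn_subRL.
    by rewrite addnC subnDA.
  apply: le_trans (lerD (X_le_d i _) sum_le) _; first by rewrite i_gt0.
  by rewrite subrr floor_ge0 Z_ge0 // i_gt0.
- by rewrite prefix_sum0 ?(ltnW lt_ik) // addr0 -eq_pre // intrKfloor.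
- rewrite prefix_sum0 ?eq_ki // addr0 floor_ge_int ltW //.
  by rewrite eq_ki in lt_k; apply: lt_k.
Qed.

End RecursiveWeights.

Theorem proposition3 (R : realType) (n d : nat) (a : nat -> int)
  (hn : (1 <= n)%N) (hd : (0 < d)%N)
  (ha1 : a 1%N = d%:Z)
  (hak : forall k : nat, (2 <= k <= n)%N ->
           a k = d%:Z * (1 + \sum_(1 <= j < k) a j))
  (z : 'I_n.+1 -> R)
  (hz : forall i : 'I_n.+1, (0 < i)%N -> 0 <= z i <= d%:R)
  (x : 'I_n.+1 -> int)
  (hx : forall i : 'I_n.+1, (0 < i)%N -> 0 <= x i <= d%:Z)
  (hxz : lex_le (fun i => (x i)%:~R) z) :
  forall i : 'I_n.+1,
    x i + \sum_(j < n.+1 | (j < i)%N) a (i - j)%N * (x j - Num.ceil (z j))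
      <= Num.floor (z i).
Proof.
move=> i.
have inord_gt0 j : (0 < j <= n)%N -> (0 < @inord n j)%N.
  by case/andP=> j_gt0 le_jn; rewrite inordK.
have x_le_d j : (0 < j <= n)%N -> x (inord j) <= d%:Z.
  by move/inord_gt0/hx/andP=> [].
have z_ge0 j : (0 < j <= n)%N -> 0 <= z (inord j).
  by move/inord_gt0/hz/andP=> [].
have [k [eq_pre lt_k]] := lex_le_prefix i hxz.
rewrite (big_ord_ltn_inord i
  (fun j (o : 'I_n.+1) => a (i - j)%N * (x o - Num.ceil (z o)))) /=.
have := lex_weighted_le_floor ha1 hak (ltn_ord i) x_le_d z_ge0 eq_pre lt_k.
by rewrite inord_val.
Qed.
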